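(* There exists a polynomial $p$ such that for every sufficiently large natural number $n$ the following holds. Let $\alpha$ be an integer with $\alpha > 7 \log n + 6$, and let $(x_1, \ldots, x_t)$ be a tuple of strings in $\{0,1\}^n$ that is mutually $\alpha$-independent, i.e. $C(x_{\pi(1)} x_{\pi(2)} \cdots x_{\pi(t)}) \geq C(x_1) + \cdots + C(x_t) - \alpha$ for every permutation $\pi$ of $\{1,\ldots,t\}$. Then $t \leq p(n)\, 2^{\alpha}$.
   Context: $C(x)$ denotes the plain Kolmogorov complexity of the binary string $x$ with respect to a fixed universal Turing machine; juxtaposition of strings denotes concatenation. Logarithms are base $2$. *)

From Stdlib Require Import Reals ClassicalEpsilon.
From mathcomp Require Import all_boot all_order all_algebra all_fingroup.
From mathcomp Require Import Rstruct.

Set Implicit Arguments.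
Unset Strict Implicit.
Unset Printing Implicit Defensive.

Inductive code : Type :=
| CZero
| CSucc
| CProj (i : nat)
| CComp (f : code) (gs : list code)
| CPrim (f g : code)
| CMu (f : code).

Fixpoint eval (k : nat) (c : code) (v : list nat) {struct k} : option nat :=
  match k with
  | 0 => None
  | S k' =>
    match c with
    | CZero => Some 0
    | CSucc => Some (S (head 0 v))
    | CProj i => Some (nth 0 v i)
    | CComp f gs =>
        let fix evs (gs : list code) : option (list nat) :=
          match gs with
          | nil => Some nil
          | g :: gs' =>
              match eval k' g v, evs gs' with
              | Some a, Some w => Some (a :: w)
              | _, _ => None
              end
          end in
        match evs gs with
        | Some w => eval k' f w
        | None => None
        end
    | CPrim f g =>
        let rest := behead v in
        let fix pr (n : nat) : option nat :=
          match n with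
          | 0 => eval k' f rest
          | S m => match pr m with
                   | Some a => eval k' g (m :: a :: rest)
                   | None => None
                   end
          end in
        pr (head 0 v)
    | CMu f =>
        let fix mu (j m : nat) : option nat :=
          match j with
          | 0 => None
          | S j' => match eval k' f (m :: v) with
                    | Some 0 => Some m
                    | Some _ => mu j' (S m)
                    | None => None
                    end
          end in
        mu k' 0
    end
  end.

(* Bijective base-2 numbering of binary strings: seq bool <-> nat. *)
Fixpoint bits_to_nat (s : seq bool) : nat :=
  match s with
  | [::] => 0
  | b :: s' => (bits_to_nat s').*2 + (if b then 2 else 1)
  end.

(* The partial computable function with code [e], viewed as a map on binary
   strings: [desc e p x] means that on input (string) p it halts with output
   (string) x. *)
Definition desc (e : code) (p x : seq bool) : Prop :=
  exists k, eval k e [:: bits_to_nat p] = Some (bits_to_nat x).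

(* A universal (additively optimal) machine [u]: it simulates every partial
   computable function with at most a constant additive overhead in the
   length of descriptions (invariance theorem). *)
Definition universal (u : code) : Prop :=
  forall e : code, exists c : nat, forall p x : seq bool,
    desc e p x -> exists q : seq bool, desc u q x /\ size q <= size p + c.

(* Plain Kolmogorov complexity of x with respect to u: the length of a
   shortest description of x.  (Defined via classical choice; for a
   universal u a description always exists.) *)
Definition KC (u : code) (x : seq bool) : nat :=
  epsilon (inhabits 0%N)
    (fun m => (exists p, size p = m /\ desc u p x) /\
              (forall p, desc u p x -> m <= size p)).

Definition concat_perm (t : nat) (xs : 'I_t -> seq bool) (pi : 'S_t)
  : seq bool := flatten [seq xs (pi i) | i <- enum 'I_t].

Definition mutually_indep (u : code) (alpha : int) (t : nat)
  (xs : 'I_t -> seq bool) : Prop :=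
  forall pi : 'S_t,
    ((KC u (concat_perm xs pi))%:Z >= (\sum_(i < t) (KC u (xs i))%:Z) - alpha)%R.

From Stdlib Require Import Reals Lia Classical ClassicalEpsilon.
From mathcomp Require Import all_boot all_order all_algebra all_fingroup.
From mathcomp Require Import Rstruct zify.
Import GRing.Theory Num.Theory Order.TTheory.
Set Implicit Arguments. Unset Strict Implicit.

(* Let q_i be a shortest description of x_i and group the indices by the pair
   (length of q_i, first bit of q_i); there are O(n) groups.  Within a group
   the first bit is known, so one program can list, group by group, the size
   of the group in log t + 1 bits followed by the q_i without their first bit,
   and compute from this list the concatenation of the x_i in group order.
   Its length is sum_i C(x_i) - t + O(n log t), while mutual independence
   makes that concatenation cost at least sum_i C(x_i) - alpha.  Hence
   t <= alpha + O(n log t), so t = O(alpha + n^2) <= p(n) 2^alpha. *)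

Notation bval := bits_to_nat.

(** * Evaluation of codes *)

(* The local fixpoints of [eval], lifted out so that the unfolding equations
   [eval_compE], [eval_primE] and [eval_muE] hold by conversion. *)
Definition eval_all (E : code -> option nat) :=
  fix go (gs : seq code) : option (seq nat) :=
  match gs with
  | [::] => Some [::]
  | g :: gs' => match E g, go gs' with
                | Some a, Some w => Some (a :: w)
                | _, _ => None
                end
  end.

Definition eval_prim (E0 : option nat) (Es : nat -> nat -> option nat) :=
  fix go (n : nat) : option nat :=
  match n with
  | 0 => E0
  | m.+1 => match go m with Some a => Es m a | None => None end
  end.

Definition eval_mu (E : nat -> option nat) :=
  fix go (j m : nat) {struct j} : option nat :=
  match j with
  | 0 => None
  | j'.+1 => match E m with
             | Some 0 => Some m
             | Some _ => go j' m.+1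
             | None => None
             end
  end.

Lemma eval_compE k f gs v : eval k.+1 (CComp f gs) v =
  if eval_all (fun g => eval k g v) gs is Some w then eval k f w else None.
Proof. by []. Qed.

Lemma eval_primE k f g v : eval k.+1 (CPrim f g) v =
  eval_prim (eval k f (behead v)) (fun m a => eval k g [:: m, a & behead v]) (head 0 v).
Proof. by []. Qed.

Lemma eval_muE k f v : eval k.+1 (CMu f) v = eval_mu (fun m => eval k f (m :: v)) k 0.
Proof. by []. Qed.

Lemma eval_all_mono (E E' : code -> option nat) gs w :
  (forall g a, E g = Some a -> E' g = Some a) ->
  eval_all E gs = Some w -> eval_all E' gs = Some w.
Proof.
move=> EE'; elim: gs w => [//|g gs IHgs] w /=.
case Eg: (E g) => [a|] //; case Egs: (eval_all E gs) => [w'|] //.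
by rewrite (EE' _ _ Eg) (IHgs _ Egs).
Qed.

Lemma eval_prim_mono E0 E0' Es Es' n a :
  (forall a, E0 = Some a -> E0' = Some a) ->
  (forall m b a, Es m b = Some a -> Es' m b = Some a) ->
  eval_prim E0 Es n = Some a -> eval_prim E0' Es' n = Some a.
Proof.
move=> E0E0' EsEs'; elim: n a => [|m IHm] a /=; first exact: E0E0'.
by case Em: (eval_prim E0 Es m) => [b|] // /EsEs'; rewrite (IHm _ Em).
Qed.

Lemma eval_mu_mono (E E' : nat -> option nat) j m a :
  (forall m a, E m = Some a -> E' m = Some a) ->
  eval_mu E j m = Some a -> eval_mu E' j.+1 m = Some a.
Proof.
move=> EE'; elim: j m => [//|j IHj] m /=.
by case Em: (E m) => [[|b]|] //; rewrite (EE' _ _ Em) //; apply: IHj.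
Qed.

Lemma eval_fuelS k c v a : eval k c v = Some a -> eval k.+1 c v = Some a.
Proof.
elim: k c v a => [//|k IHk] [||i|f gs|f g|f] v a //.
- rewrite !eval_compE.
  case Egs: (eval_all _ gs) => [w|] //.
  by rewrite (eval_all_mono (IHk^~ v) Egs); apply: IHk.
- by rewrite !eval_primE; apply: eval_prim_mono => *; apply: IHk.
- by rewrite !eval_muE; apply: eval_mu_mono => *; apply: IHk.
Qed.

Lemma eval_fuel_le k k' c v a :
  k <= k' -> eval k c v = Some a -> eval k' c v = Some a.
Proof.
move=> /subnK <-; elim: (k' - k) => [//|d IHd] E.
by rewrite addSn; apply/eval_fuelS/IHd.
Qed.

(* [desc e p x] is [ev e [:: bval p] (bval x)] by conversion. *)
Definition ev c v a := exists k, eval k c v = Some a.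

Lemma ev_det c v a b : ev c v a -> ev c v b -> a = b.
Proof.
move=> [k1 E1] [k2 E2].
have := eval_fuel_le (leq_maxl k1 k2) E1.
by rewrite (eval_fuel_le (leq_maxr k1 k2) E2) => -[].
Qed.

Lemma ev_zero v : ev CZero v 0. Proof. by exists 1. Qed.
Lemma ev_succ v : ev CSucc v (head 0 v).+1. Proof. by exists 1. Qed.
Lemma ev_proj i v : ev (CProj i) v (nth 0 v i). Proof. by exists 1. Qed.

Fixpoint ev_all v gs ws : Prop :=
  match gs, ws with
  | [::], [::] => True
  | g :: gs, w :: ws => ev g v w /\ ev_all v gs ws
  | _, _ => False
  end.

Lemma ev_all_fuel v gs ws : ev_all v gs ws ->
  exists k, forall k', k <= k' -> eval_all (fun g => eval k' g v) gs = Some ws.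
Proof.
elim: gs ws => [|g gs IHgs] [|w ws] //=; first by exists 0.
move=> [[kg Eg] /IHgs[k Egs]]; exists (maxn kg k) => k' /[!geq_max] /andP[kg_le k_le].
by rewrite (eval_fuel_le kg_le Eg) Egs.
Qed.

Lemma ev_comp f gs v ws b : ev_all v gs ws -> ev f ws b -> ev (CComp f gs) v b.
Proof.
move=> /ev_all_fuel[k Egs] [kf Ef]; exists (maxn k kf).+1.
by rewrite eval_compE Egs ?leq_maxl // (eval_fuel_le _ Ef) ?leq_maxr.
Qed.

Lemma ev_comp1 f g v w b : ev g v w -> ev f [:: w] b -> ev (CComp f [:: g]) v b.
Proof. by move=> Eg; apply: ev_comp. Qed.

Lemma ev_comp2 f g1 g2 v w1 w2 b : ev g1 v w1 -> ev g2 v w2 ->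
  ev f [:: w1; w2] b -> ev (CComp f [:: g1; g2]) v b.
Proof. by move=> Eg1 Eg2; apply: ev_comp. Qed.

Lemma ev_prim f g n rest (s : nat -> nat) :
  ev f rest (s 0) -> (forall m, m < n -> ev g [:: m, s m & rest] (s m.+1)) ->
  ev (CPrim f g) (n :: rest) (s n).
Proof.
move=> [kf Ef] Eg.
suff [k Ek] : exists k, forall k', k <= k' ->
    eval_prim (eval k' f rest) (fun m a => eval k' g [:: m, a & rest]) n = Some (s n).
  by exists k.+1; rewrite eval_primE Ek.
elim: n Eg => [|m IHm] Eg.
  by exists kf => k' /eval_fuel_le; apply.
have [k Ek] := IHm (fun i lt_i_m => Eg i (ltnW lt_i_m)).
have [kg Ekg] := Eg m (ltnSn m).
exists (maxn k kg) => k' /[!geq_max] /andP[k_le kg_le] /=.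
by rewrite Ek // (eval_fuel_le kg_le Ekg).
Qed.

(** * Programs for arithmetic and bit strings *)

Definition cpred := CPrim CZero (CProj 0).

Lemma ev_pred x r : ev cpred (x :: r) x.-1.
Proof.
apply: (@ev_prim _ _ _ _ (fun m => m.-1)); first exact: ev_zero.
by move=> m _; apply: ev_proj.
Qed.

Definition cadd := CPrim (CProj 0) (CComp CSucc [:: CProj 1]).

Lemma ev_add x y : ev cadd [:: x; y] (x + y).
Proof.
apply: (@ev_prim _ _ _ _ (fun m => m + y)); first exact: ev_proj.
by move=> m _; apply: ev_comp1; [exact: ev_proj|exact: ev_succ].
Qed.

Definition csub0 := CPrim (CProj 0) (CComp cpred [:: CProj 1]).
Definition csub := CComp csub0 [:: CProj 1; CProj 0].

Lemma ev_sub x y : ev csub [:: x; y] (x - y).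
Proof.
apply: ev_comp2; [exact: ev_proj|exact: ev_proj|].
apply: (@ev_prim _ _ _ _ (fun m => x - m)); first by rewrite subn0; exact: ev_proj.
by move=> m _; apply: ev_comp1; [exact: ev_proj|rewrite subnS; apply: ev_pred].
Qed.

Definition cmul := CPrim CZero (CComp cadd [:: CProj 1; CProj 2]).

Lemma ev_mul x y : ev cmul [:: x; y] (x * y).
Proof.
apply: (@ev_prim _ _ _ _ (fun m => m * y)); first exact: ev_zero.
move=> m _; apply: ev_comp2; [exact: ev_proj|exact: ev_proj|].
by rewrite mulSn addnC; apply: ev_add.
Qed.

Definition cone := CComp CSucc [:: CZero].

Lemma ev_one v : ev cone v 1.
Proof. by apply: ev_comp1; [exact: ev_zero|exact: ev_succ]. Qed.

Definition cpow2 := CPrim cone (CComp cadd [:: CProj 1; CProj 1]).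

Lemma ev_pow2 x r : ev cpow2 (x :: r) (2 ^ x).
Proof.
apply: (@ev_prim _ _ _ _ (fun m => 2 ^ m)); first exact: ev_one.
move=> m _; apply: ev_comp2; [exact: ev_proj|exact: ev_proj|].
by rewrite expnS mul2n -addnn; apply: ev_add.
Qed.

Definition ciszero := CPrim cone CZero.

Lemma ev_iszero x r : ev ciszero (x :: r) (x == 0).
Proof.
apply: (@ev_prim _ _ _ _ (fun m => nat_of_bool (m == 0))); first exact: ev_one.
by move=> m _; apply: ev_zero.
Qed.

Definition codd := CPrim CZero (CComp ciszero [:: CProj 1]).

Lemma ev_odd x r : ev codd (x :: r) (odd x).
Proof.
apply: (@ev_prim _ _ _ _ (fun m => nat_of_bool (odd m))); first exact: ev_zero.
move=> m _; apply: ev_comp1; first exact: ev_proj.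
by rewrite oddS; case: (odd m); [exact: (ev_iszero 1 [::])|exact: (ev_iszero 0 [::])].
Qed.

Definition cdiv2 := CPrim CZero (CComp cadd [:: CProj 1; CComp codd [:: CProj 0]]).

Lemma ev_div2 x r : ev cdiv2 (x :: r) (x./2).
Proof.
apply: (@ev_prim _ _ _ _ (fun m => m./2)); first exact: ev_zero.
move=> m _; apply: ev_comp2; [exact: ev_proj|apply: ev_comp1; [exact: ev_proj|exact: ev_odd]|].
by rewrite /= uphalf_half addnC; apply: ev_add.
Qed.

Definition ceq := CComp ciszero [:: CComp cadd [:: csub; CComp csub [:: CProj 1; CProj 0]]].

Lemma ev_eq x y : ev ceq [:: x; y] (x == y).
Proof.
have -> : (x == y) = ((x - y) + (y - x) == 0) by rewrite addn_eq0 !subn_eq0 eqn_leq.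
apply: ev_comp1; last exact: ev_iszero.
apply: ev_comp2; [exact: ev_sub| |exact: ev_add].
by apply: ev_comp2; [exact: ev_proj|exact: ev_proj|exact: ev_sub].
Qed.

Definition nbehead x := x.-1./2.
Definition cbehead := CComp cdiv2 [:: CComp cpred [:: CProj 0]].

Lemma ev_behead x r : ev cbehead (x :: r) (nbehead x).
Proof. by apply: ev_comp1; [apply: ev_comp1; [exact: ev_proj|exact: ev_pred]|exact: ev_div2]. Qed.

Definition ndrop j x := iter j nbehead x.
Definition cdrop := CPrim (CProj 0) (CComp cbehead [:: CProj 1]).

Lemma ev_drop j x : ev cdrop [:: j; x] (ndrop j x).
Proof.
apply: (@ev_prim _ _ _ _ (fun m => ndrop m x)); first exact: ev_proj.
by move=> m _; apply: ev_comp1; [exact: ev_proj|exact: ev_behead].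
Qed.

Definition ntake j x := x - 2 ^ j * ndrop j x.
Definition ctake := CComp csub [:: CProj 1; CComp cmul [:: CComp cpow2 [:: CProj 0]; cdrop]].

Lemma ev_take j x : ev ctake [:: j; x] (ntake j x).
Proof.
apply: ev_comp2; [exact: ev_proj| |exact: ev_sub].
by apply: ev_comp2; [apply: ev_comp1; [exact: ev_proj|exact: ev_pow2]|exact: ev_drop|exact: ev_mul].
Qed.

(* The number of j < x whose first j + 1 bits are all zero; since a string is
   shorter than its number ([size_le_bval]), this counts the leading zeros. *)
Definition lead_zeros x := \sum_(j < x) (ntake j.+1 x == (2 ^ j.+1).-1).
Definition clead_zeros0 := CPrim CZero (CComp cadd [:: CProj 1; CComp ceq
   [:: CComp ctake [:: CComp CSucc [:: CProj 0]; CProj 2];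
       CComp cpred [:: CComp cpow2 [:: CComp CSucc [:: CProj 0]]]]]).
Definition clead_zeros := CComp clead_zeros0 [:: CProj 0; CProj 0].

Lemma ev_lead_zeros x : ev clead_zeros [:: x] (lead_zeros x).
Proof.
apply: ev_comp2; [exact: ev_proj|exact: ev_proj|].
apply: (@ev_prim _ _ _ _ (fun m => \sum_(j < m) (ntake j.+1 x == (2 ^ j.+1).-1))).
  by rewrite big_ord0; exact: ev_zero.
move=> m _; apply: ev_comp2; [exact: ev_proj| |by rewrite big_ord_recr /=; apply: ev_add].
apply: ev_comp2; last exact: ev_eq.
  apply: ev_comp2; [apply: ev_comp1; [exact: ev_proj|exact: ev_succ]|exact: ev_proj|exact: ev_take].
apply: ev_comp1; last exact: ev_pred.
apply: ev_comp1; [apply: ev_comp1; [exact: ev_proj|exact: ev_succ]|exact: ev_pow2].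
Qed.

(** * Bit strings as numbers *)

Lemma bval_cat s s' : bval (s ++ s') = bval s + 2 ^ size s * bval s'.
Proof.
elim: s => [|b s IHs] /=; first by rewrite add0n mul1n.
by rewrite IHs expnS doubleD -mul2n -mulnA mul2n; lia.
Qed.

Lemma bval_cons b s : bval (b :: s) = ((bval s).*2 + b).+1.
Proof. by case: b => /=; lia. Qed.

Lemma bval_inj : injective bval.
Proof.
elim=> [|b s IHs] [|b' s'] //=; [by case: b'; rewrite addnC|by case: b; rewrite addnC|].
move=> E; have eq_b : b = b'.
  by move/(congr1 odd): E; rewrite !oddD !odd_double; case: b; case: b'.
subst b'; congr (_ :: _); apply: IHs.
by move: E; case: (b); rewrite -!muln2; lia.
Qed.

Lemma size_le_bval s : size s <= bval s.
Proof. by elim: s => [//|b s IHs] /=; case: b; rewrite -addnn; lia. Qed.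

Lemma bval_nseq_false j : bval (nseq j false) = (2 ^ j).-1.
Proof.
elim: j => [//|j IHj] /=; rewrite IHj expnS.
by have := expn_gt0 2 j; case: (2 ^ j) => // x _; rewrite -mul2n /=; lia.
Qed.

Lemma nbehead_bval s : nbehead (bval s) = bval (behead s).
Proof.
case: s => [|b s] //=; rewrite /nbehead.
have -> : ((bval s).*2 + (if b then 2 else 1)).-1 = b + (bval s).*2 by case: b; lia.
exact: half_bit_double.
Qed.

Lemma ndrop_bval j s : ndrop j (bval s) = bval (drop j s).
Proof.
elim: j s => [|j IHj] s; first by rewrite drop0.
rewrite /ndrop iterSr -/(ndrop j _) nbehead_bval IHj.
by case: s => [|b s] //=; rewrite drop_nil.
Qed.

Lemma ntake_bval j s : ntake j (bval s) = bval (take j s).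
Proof.
rewrite /ntake ndrop_bval -{1}(cat_take_drop j s) bval_cat.
case: (leqP j (size s)) => le_js.
  by rewrite size_take_min (minn_idPl le_js) addnK.
by rewrite drop_oversize ?(ltnW le_js) //= !muln0 subn0 addn0.
Qed.

Lemma lead_zeros_bval a r : lead_zeros (bval (nseq a false ++ true :: r)) = a.
Proof.
set s := nseq a false ++ true :: r.
have lt_a_s : a < bval s.
  by apply: leq_trans (size_le_bval _); rewrite size_cat size_nseq /=; lia.
rewrite /lead_zeros (eq_bigr (fun j : 'I_(bval s) => nat_of_bool (j < a))).
  rewrite -(big_mkord xpredT (fun j => nat_of_bool (j < a))).
  rewrite (big_cat_nat (n := a)) //= ?(ltnW lt_a_s) //.
  rewrite [X in _ + X]big1_seq ?addn0 => [|i /andP[_]]; last first.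
    by rewrite mem_index_iota => /andP[le_ai _]; rewrite ltnNge le_ai.
  rewrite big_mkord (eq_bigr (fun _ => 1)) => [|i _]; last by rewrite ltn_ord.
  by rewrite sum1_card card_ord.
move=> j _; rewrite ntake_bval -bval_nseq_false; congr nat_of_bool.
apply/eqP/idP => [/bval_inj take_s|lt_ja]; last first.
  by congr bval; rewrite /s takel_cat ?size_nseq // take_nseq.
apply: contraTT isT; rewrite -leqNgt => le_aj.
have : nth false (take j.+1 s) a = true.
  by rewrite nth_take // /s nth_cat size_nseq ltnn subnn.
by rewrite take_s nth_nseq; case: ifP.
Qed.

Fixpoint bin W m : seq bool :=
  if W is W'.+1 then odd m :: bin W' m./2 else [::].

Lemma size_bin W m : size (bin W m) = W.
Proof. by elim: W m => [|W IHW] m //=; rewrite IHW. Qed.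

Lemma bval_bin W m : m < 2 ^ W -> bval (bin W m) = (2 ^ W).-1 + m.
Proof.
elim: W m => [|W IHW] m /=; first by rewrite expn0; case: m.
move=> lt_m; rewrite IHW; last by rewrite ltn_half_double -mul2n -expnS.
have := odd_double_half m; have := expn_gt0 2 W; rewrite expnS.
by move: (m./2) (2 ^ W) => h x; case: (odd m) => /=; rewrite -!muln2; lia.
Qed.

(** * The decoder *)

(* The decoder reads [0^n 1 0^W 1] followed by one block per group g = 0, 1,
   ...: the number m of members of group g in W bits (as [bin W m]), then the
   members' descriptions, all of length g./2 + 1 and first bit odd g, with
   their first bit removed.  It runs u on each description and prepends the
   (length n) outputs to its output.  The loop over groups runs as many times
   as the value of the whole input, which exceeds the number of groups; past
   the last block the stream is 0 and a group contributes nothing.  The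
   parameters [Wp] and [Pw] below stand for 2^W - 1 = bval (bin W 0) and 2^n. *)

Definition skip_group W Wp j R := ndrop ((ntake W R - Wp) * j./2) (ndrop W R).
Definition cskip_group :=
  CComp cdrop [:: CComp cmul [:: CComp csub [:: CComp ctake [:: CProj 3; CProj 1]; CProj 4];
                                 CComp cdiv2 [:: CProj 0]];
                  CComp cdrop [:: CProj 3; CProj 1]].

Lemma ev_skip_group j R B W Wp : ev cskip_group [:: j; R; B; W; Wp] (skip_group W Wp j R).
Proof.
apply: ev_comp2; last exact: ev_drop.
- apply: ev_comp2; last exact: ev_mul.
  + apply: ev_comp2; last exact: ev_sub.
    * by apply: ev_comp2; [exact: ev_proj|exact: ev_proj|exact: ev_take].
    * exact: ev_proj.
  + by apply: ev_comp1; [exact: ev_proj|exact: ev_div2].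
- by apply: ev_comp2; [exact: ev_proj|exact: ev_proj|exact: ev_drop].
Qed.

Fixpoint group_stream W Wp B g :=
  if g is j.+1 then skip_group W Wp j (group_stream W Wp B j) else B.
Definition cgroup_stream := CPrim (CProj 0) cskip_group.

Lemma ev_group_stream g B W Wp : ev cgroup_stream [:: g; B; W; Wp] (group_stream W Wp B g).
Proof.
apply: (@ev_prim _ _ _ _ (group_stream W Wp B)); first exact: ev_proj.
by move=> m _; apply: ev_skip_group.
Qed.

Definition member R k bb i := ((ntake k (ndrop (i * k) R)).*2 + bb).+1.
Definition cmember_tail :=
  CComp ctake [:: CProj 4; CComp cdrop [:: CComp cmul [:: CProj 0; CProj 4]; CProj 3]].
Definition cmember :=
  CComp CSucc [:: CComp cadd [:: CComp cadd [:: cmember_tail; cmember_tail]; CProj 5]].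

Lemma ev_member i a O R k bb Pw : ev cmember [:: i; a; O; R; k; bb; Pw] (member R k bb i).
Proof.
have Etail : ev cmember_tail [:: i; a; O; R; k; bb; Pw] (ntake k (ndrop (i * k) R)).
  apply: ev_comp2; [exact: ev_proj| |exact: ev_take].
  apply: ev_comp2; [|exact: ev_proj|exact: ev_drop].
  by apply: ev_comp2; [exact: ev_proj|exact: ev_proj|exact: ev_mul].
apply: ev_comp1; last exact: ev_succ.
apply: ev_comp2; [|exact: ev_proj|exact: ev_add].
by apply: ev_comp2; [exact: Etail|exact: Etail|rewrite -addnn; exact: ev_add].
Qed.

Fixpoint prepend_outputs (y : nat -> nat) Pw O m :=
  if m is i.+1 then y i + Pw * prepend_outputs y Pw O i else O.
Definition cgroup u :=
  CPrim (CProj 0) (CComp cadd [:: CComp u [:: cmember]; CComp cmul [:: CProj 6; CProj 1]]).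

Lemma ev_group u m O R k bb Pw (y : nat -> nat) :
  (forall i, i < m -> ev u [:: member R k bb i] (y i)) ->
  ev (cgroup u) [:: m; O; R; k; bb; Pw] (prepend_outputs y Pw O m).
Proof.
move=> Ey; apply: (@ev_prim _ _ _ _ (prepend_outputs y Pw O)); first exact: ev_proj.
move=> i lt_im; apply: ev_comp2; last exact: ev_add.
- by apply: ev_comp1; [exact: ev_member|exact: Ey].
- by apply: ev_comp2; [exact: ev_proj|exact: ev_proj|exact: ev_mul].
Qed.

Definition cgroups u :=
  let stream := CComp cgroup_stream [:: CProj 0; CProj 2; CProj 3; CProj 4] in
  CPrim CZero (CComp (cgroup u)
    [:: CComp csub [:: CComp ctake [:: CProj 3; stream]; CProj 4]; CProj 1;
        CComp cdrop [:: CProj 3; stream]; CComp cdiv2 [:: CProj 0];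
        CComp codd [:: CProj 0]; CProj 5]).

Lemma ev_groups u (v B W Wp Pw : nat) (s : nat -> nat) :
  s 0 = 0 ->
  (forall g, g < v -> ev (cgroup u) [:: ntake W (group_stream W Wp B g) - Wp; s g;
     ndrop W (group_stream W Wp B g); g./2; nat_of_bool (odd g); Pw] (s g.+1)) ->
  ev (cgroups u) [:: v; B; W; Wp; Pw] (s v).
Proof.
move=> s0 Es; apply: (@ev_prim _ _ _ _ s); first by rewrite s0; exact: ev_zero.
move=> g lt_gv; apply: ev_comp (Es g lt_gv).
have Estream : ev (CComp cgroup_stream [:: CProj 0; CProj 2; CProj 3; CProj 4])
    [:: g, s g & [:: B; W; Wp; Pw]] (group_stream W Wp B g).
  by apply: (@ev_comp _ _ _ [:: g; B; W; Wp]); [do !split; exact: ev_proj|exact: ev_group_stream].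
do !split; try exact: ev_proj.
- apply: ev_comp2; [|exact: ev_proj|exact: ev_sub].
  by apply: ev_comp2; [exact: ev_proj|exact: Estream|exact: ev_take].
- by apply: ev_comp2; [exact: ev_proj|exact: Estream|exact: ev_drop].
- by apply: ev_comp1; [exact: ev_proj|exact: ev_div2].
- by apply: ev_comp1; [exact: ev_proj|exact: ev_odd].
Qed.

Definition chead_n := CComp clead_zeros [:: CProj 0].
Definition chead_rest := CComp cdrop [:: CComp CSucc [:: chead_n]; CProj 0].
Definition chead_W := CComp clead_zeros [:: chead_rest].
Definition chead_blocks := CComp cdrop [:: CComp CSucc [:: chead_W]; chead_rest].
Definition cdecode u :=
  CComp (cgroups u) [:: CProj 0; chead_blocks; chead_W;
                        CComp cpred [:: CComp cpow2 [:: chead_W]]; CComp cpow2 [:: chead_n]].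

Lemma ev_decode u v (s : nat -> nat) :
  let n := lead_zeros v in
  let rest := ndrop n.+1 v in
  let W := lead_zeros rest in
  let B := ndrop W.+1 rest in
  s 0 = 0 ->
  (forall g, g < v -> ev (cgroup u)
     [:: ntake W (group_stream W (2 ^ W).-1 B g) - (2 ^ W).-1; s g;
         ndrop W (group_stream W (2 ^ W).-1 B g); g./2; nat_of_bool (odd g); 2 ^ n]
     (s g.+1)) ->
  ev (cdecode u) [:: v] (s v).
Proof.
move=> n rest W B s0 Es.
have En : ev chead_n [:: v] n by apply: ev_comp1; [exact: ev_proj|exact: ev_lead_zeros].
have Erest : ev chead_rest [:: v] rest.
  by apply: ev_comp2; [apply: ev_comp1; [exact: En|exact: ev_succ]|exact: ev_proj|exact: ev_drop].
have EW : ev chead_W [:: v] W by apply: ev_comp1; [exact: Erest|exact: ev_lead_zeros].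
apply: (@ev_comp _ _ _ [:: v; B; W; (2 ^ W).-1; 2 ^ n]); last exact: ev_groups.
do !split; [exact: ev_proj| |exact: EW| |].
- by apply: ev_comp2; [apply: ev_comp1; [exact: EW|exact: ev_succ]|exact: Erest|exact: ev_drop].
- by apply: ev_comp1; [apply: ev_comp1; [exact: EW|exact: ev_pow2]|exact: ev_pred].
- by apply: ev_comp1; [exact: En|exact: ev_pow2].
Qed.

(** * Correctness of the encoding *)

Lemma drop_flatten_uniform (T : Type) k (ss : seq (seq T)) r i :
  all (fun s => size s == k) ss -> i <= size ss ->
  drop (i * k) (flatten ss ++ r) = flatten (drop i ss) ++ r.
Proof.
elim: ss i => [|s ss IHss] [|i] //=; rewrite ?mul0n ?drop0 // => /andP[/eqP size_s size_ss] le_i.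
by rewrite -catA mulSn drop_cat size_s ltnNge leq_addr /= addKn IHss.
Qed.

Lemma member_flatten (ss : seq (seq bool)) r k (b : bool) i :
  all (fun s => size s == k) ss -> i < size ss ->
  member (bval (flatten ss ++ r)) k b i = bval (b :: nth [::] ss i).
Proof.
move=> size_ss lt_i.
rewrite /member bval_cons ndrop_bval ntake_bval drop_flatten_uniform ?(ltnW lt_i) //.
rewrite (drop_nth [::] lt_i) /= -catA take_size_cat //.
by move/all_nthP: size_ss => /(_ [::] i lt_i) /eqP.
Qed.

Lemma prepend_outputs_flatten n (ys : seq (seq bool)) (O : seq bool) m :
  all (fun y => size y == n) ys -> m <= size ys ->
  prepend_outputs (fun i => bval (nth [::] ys i)) (2 ^ n) (bval O) m =
  bval (flatten (rev (take m ys)) ++ O).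
Proof.
move=> size_ys; elim: m => [|m IHm] le_m /=; first by rewrite take0.
rewrite IHm ?(ltnW le_m) // (take_nth [::] le_m) rev_rcons /= -catA [in RHS]bval_cat.
by move/all_nthP: size_ys => /(_ [::] m le_m) /eqP ->.
Qed.

Section Encoding.

Variables (t : nat) (key : 'I_t -> nat) (q : 'I_t -> seq bool) (W : nat).

Definition fiber g := [seq i <- enum 'I_t | key i == g].
Definition fibers m := flatten [seq fiber j | j <- iota 0 m].

Definition block g := bin W (size (fiber g)) ++ flatten [seq behead (q i) | i <- fiber g].
Definition blocks G g := flatten [seq block j | j <- iota g (G - g)].
Definition encode n G := nseq n false ++ true :: nseq W false ++ true :: blocks G 0.

Lemma blocks_cons G g : g < G -> blocks G g = block g ++ blocks G g.+1.
Proof. by move=> lt_gG; rewrite /blocks -(subnSK lt_gG). Qed.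

Lemma blocks_nil G g : G <= g -> blocks G g = [::].
Proof. by move=> le_Gg; rewrite /blocks (eqP le_Gg). Qed.

Lemma size_fiber g : size (fiber g) <= t.
Proof. by rewrite size_filter (leq_trans (count_size _ _)) ?size_enum_ord. Qed.

Lemma fibersS m : fibers m.+1 = fibers m ++ fiber m.
Proof. by rewrite /fibers -addn1 iotaD map_cat flatten_cat /= cats0. Qed.

Lemma mem_fibers m i : (i \in fibers m) = (key i < m).
Proof.
elim: m => [|m IHm]; first by rewrite ltn0.
by rewrite fibersS mem_cat IHm mem_filter mem_enum andbT ltnS [RHS]leq_eqVlt orbC.
Qed.

Lemma uniq_fibers m : uniq (fibers m).
Proof.
elim: m => [//|m IHm]; rewrite fibersS cat_uniq IHm filter_uniq ?enum_uniq // andbT /=.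
by apply/hasPn => i; rewrite mem_filter => /andP[/eqP <- _]; rewrite mem_fibers ltnn.
Qed.

Lemma perm_fibers G : (forall i, key i < G) -> perm_eq (fibers G) (enum 'I_t).
Proof.
move=> key_lt; apply: uniq_perm; rewrite ?uniq_fibers ?enum_uniq // => i.
by rewrite mem_fibers key_lt mem_enum.
Qed.

Lemma size_encode n G : (forall i, key i < G) ->
  size (encode n G) = n + W + 2 + G * W + \sum_(i < t) size (behead (q i)).
Proof.
move=> key_lt; rewrite /encode /blocks subn0 size_cat size_nseq /= size_cat size_nseq /=.
rewrite size_flatten /shape -map_comp sumnE big_map.
rewrite (eq_bigr (fun j => W + \sum_(i <- fiber j) size (behead (q i)))); last first.
  by move=> j _; rewrite /= size_cat size_bin size_flatten /shape sumnE !big_map.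
rewrite big_split /= big_const_seq count_predT size_iota iter_addn_0 mulnC.
rewrite -(big_map fiber xpredT (fun l => \sum_(i <- l) size (behead (q i)))).
rewrite -big_flatten /= (perm_big _ (perm_fibers key_lt)) /= big_enum (eq_bigl xpredT) //; lia.
Qed.

Hypothesis size_tail : forall i, size (behead (q i)) = (key i)./2.
Hypothesis t_lt : t < 2 ^ W.

Lemma group_stream_blocks G g :
  group_stream W (2 ^ W).-1 (bval (blocks G 0)) g = bval (blocks G g).
Proof.
elim: g => [//|g IHg] /=; rewrite IHg /skip_group.
have [lt_gG|le_Gg] := ltnP g G; last first.
  by rewrite !blocks_nil ?(leq_trans le_Gg) //= /ntake /ndrop iter_fix.
rewrite (blocks_cons lt_gG) /block -catA ntake_bval !ndrop_bval.
rewrite take_size_cat ?size_bin // bval_bin ?(leq_ltn_trans (size_fiber _) t_lt) //.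
rewrite addKn drop_size_cat ?size_bin //.
suff -> : size (fiber g) * g./2 = size (flatten [seq behead (q i) | i <- fiber g]).
  by rewrite drop_size_cat.
rewrite size_flatten /shape -map_comp (eq_in_map _ (fun _ => g./2) _).1.
  by elim: (fiber g) => //= i l <-; rewrite mulSn.
by move=> i; rewrite mem_filter => /andP[/eqP <- _] /=.
Qed.

Variables (u : code) (n G : nat) (xs : 'I_t -> seq bool).
Hypothesis head_q : forall i, q i = odd (key i) :: behead (q i).
Hypothesis size_xs : forall i, size (xs i) = n.
Hypothesis q_describes : forall i, desc u (q i) (xs i).

Let output g := bval (flatten [seq xs i | i <- rev (fibers (minn g G))]).

Lemma ev_group_output g : ev (cgroup u)
  [:: ntake W (group_stream W (2 ^ W).-1 (bval (blocks G 0)) g) - (2 ^ W).-1; output g;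
      ndrop W (group_stream W (2 ^ W).-1 (bval (blocks G 0)) g); g./2; nat_of_bool (odd g); 2 ^ n]
  (output g.+1).
Proof.
rewrite group_stream_blocks.
have [lt_gG|le_Gg] := ltnP g G; last first.
  rewrite blocks_nil //= /ntake /ndrop iter_fix //.
  have -> : output g.+1 = prepend_outputs (fun _ => 0) (2 ^ n) (output g) 0.
    by rewrite /output (minn_idPr le_Gg) (minn_idPr (leq_trans le_Gg (leqnSn _))).
  exact: ev_group.
rewrite (blocks_cons lt_gG) /block -catA ntake_bval ndrop_bval.
rewrite take_size_cat ?size_bin // bval_bin ?(leq_ltn_trans (size_fiber _) t_lt) //.
rewrite addKn drop_size_cat ?size_bin //.
set l := fiber g; set ys := [seq xs i | i <- l].
have size_ys : all (fun y => size y == n) ys.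
  by apply/allP => y /mapP[i _ ->]; rewrite size_xs.
have -> : output g.+1 = prepend_outputs (fun i => bval (nth [::] ys i)) (2 ^ n) (output g) (size l).
  rewrite /output prepend_outputs_flatten ?size_map // take_oversize ?size_map //.
  by rewrite (minn_idPl lt_gG) (minn_idPl (ltnW lt_gG)) fibersS rev_cat map_cat flatten_cat map_rev.
apply: ev_group => i lt_il.
have i0 : 'I_t by exact: Ordinal (leq_trans lt_il (size_fiber g)).
have key_nth : key (nth i0 l i) = g.
  by have := mem_nth i0 lt_il; rewrite mem_filter => /andP[/eqP].
rewrite member_flatten ?size_map //; last first.
  apply/allP => y /mapP[j]; rewrite mem_filter => /andP[/eqP key_j _] ->.
  by rewrite size_tail key_j.
by rewrite !(nth_map i0) // -{1}key_nth -head_q; apply: q_describes.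
Qed.

Lemma decode_encode : (forall i, key i < G) -> 0 < W ->
  desc (cdecode u) (encode n G) (flatten [seq xs i | i <- rev (fibers G)]).
Proof.
move=> key_lt W_gt0; rewrite /desc.
have le_G_enc : G <= bval (encode n G).
  apply: leq_trans (size_le_bval _); rewrite size_encode //.
  by apply: leq_trans (leq_addr _ _); apply: leq_trans (leq_addl _ _); apply: leq_pmulr.
have <- : output (bval (encode n G)) = bval (flatten [seq xs i | i <- rev (fibers G)]).
  by rewrite /output (minn_idPr le_G_enc).
have lead_n : lead_zeros (bval (encode n G)) = n by rewrite lead_zeros_bval.
have rest_W : ndrop n.+1 (bval (encode n G)) = bval (nseq W false ++ true :: blocks G 0).
  by rewrite ndrop_bval /encode -cat_rcons drop_size_cat // size_rcons size_nseq.
have lead_W : lead_zeros (bval (nseq W false ++ true :: blocks G 0)) = W by rewrite lead_zeros_bval.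
have rest_blocks : ndrop W.+1 (bval (nseq W false ++ true :: blocks G 0)) = bval (blocks G 0).
  by rewrite ndrop_bval -cat_rcons drop_size_cat // size_rcons size_nseq.
have := @ev_decode u (bval (encode n G)) output; cbv zeta.
rewrite lead_n rest_W lead_W rest_blocks; apply; first by rewrite /output min0n.
by move=> g _; apply: ev_group_output.
Qed.

End Encoding.

(** * Kolmogorov complexity *)

Lemma ex_minimal_nat (P : nat -> Prop) :
  (exists m, P m) -> exists m, P m /\ forall j, P j -> m <= j.
Proof.
move=> [m Pm]; elim: m {-2}m (leqnn m) Pm => [|M IHM] m le_mM Pm.
  by exists m; split => // j _; move: le_mM; rewrite leqn0 => /eqP ->.
have [[j [lt_jm Pj]]|no_smaller] := classic (exists j, j < m /\ P j).
  by apply: (IHM j) => //; lia.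
exists m; split => // j Pj; rewrite leqNgt; apply/negP => lt_jm.
by apply: no_smaller; exists j.
Qed.

Lemma desc_id x : desc (CProj 0) x x.
Proof. by exists 1. Qed.

Lemma desc_det u p x y : desc u p x -> desc u p y -> x = y.
Proof. by move=> Ex Ey; apply/bval_inj/(ev_det Ex Ey). Qed.

Section Complexity.

Variable u : code.
Hypothesis u_universal : universal u.

Lemma KC_minimal x : (exists p, size p = KC u x /\ desc u p x) /\
  (forall p, desc u p x -> KC u x <= size p).
Proof.
have [c Ec] := u_universal (CProj 0).
have [q [Eq _]] := Ec x x (desc_id x).
have ex_desc : exists m, exists p, size p = m /\ desc u p x by exists (size q), q.
have [m [[p [size_p Ep]] min_m]] := ex_minimal_nat ex_desc.
have ex_min : exists m, (exists p, size p = m /\ desc u p x) /\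
    forall p, desc u p x -> m <= size p.
  by exists m; split=> [|p' Ep']; [exists p|apply: min_m; exists p'].
exact: (epsilon_spec (inhabits 0) _ ex_min).
Qed.

Lemma KC_le_size : exists c, forall x, KC u x <= size x + c.
Proof.
have [c Ec] := u_universal (CProj 0); exists c => x.
have [q [Eq size_q]] := Ec x x (desc_id x).
exact: leq_trans ((KC_minimal x).2 _ Eq) size_q.
Qed.

Lemma KC_gt0 : exists N, forall x, N <= size x -> 0 < KC u x.
Proof.
suff KC0 x : KC u x = 0 -> desc u [::] x.
  have [[y Ey]|no_desc] := classic (exists y, desc u [::] y).
    exists (size y).+1 => x; rewrite lt0n; apply: contraTneq => /KC0 Ex.
    by rewrite (desc_det Ex Ey) ltnn.
  by exists 0 => x _; rewrite lt0n; apply/eqP => /KC0 Ex; apply: no_desc; exists x.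
by have [[p [size_p Ep]] _] := KC_minimal x; rewrite -size_p => /size0nil Ep0; rewrite -Ep0.
Qed.

Lemma KC_shortest t (xs : 'I_t -> seq bool) :
  exists q : 'I_t -> seq bool, forall i, size (q i) = KC u (xs i) /\ desc u (q i) (xs i).
Proof.
exists (fun i => epsilon (inhabits [::]) (fun p => size p = KC u (xs i) /\ desc u p (xs i))).
by move=> i; exact: (epsilon_spec (inhabits [::]) _ (KC_minimal (xs i)).1).
Qed.

End Complexity.

(** * The bound *)

Lemma perm_eq_enum_ord t (s : seq 'I_t) : perm_eq s (enum 'I_t) ->
  exists pi : 'S_t, [seq pi i | i <- enum 'I_t] = s.
Proof.
rewrite -[enum 'I_t]/(val (ord_tuple t)) => /tuple_permP[pi ->].
by exists pi; rewrite /= -map_comp enumT; apply: eq_map => i; rewrite tnth_ord_tuple.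
Qed.

Lemma concat_perm_perm_eq t (xs : 'I_t -> seq bool) (s : seq 'I_t) :
  perm_eq s (enum 'I_t) -> exists pi, concat_perm xs pi = flatten [seq xs i | i <- s].
Proof.
by move=> /perm_eq_enum_ord[pi <-]; exists pi; rewrite /concat_perm -[in RHS]map_comp.
Qed.

Lemma mutually_indep_count u (a t n c0 cD : nat) (xs : 'I_t -> seq bool) :
  universal u -> (forall x, KC u x <= size x + c0) ->
  (forall p x, desc (cdecode u) p x -> exists q, desc u q x /\ size q <= size p + cD) ->
  (forall i, 0 < KC u (xs i)) -> (forall i, size (xs i) = n) ->
  mutually_indep u (Posz a) xs ->
  t <= a + (n + 2 + cD) + (2 * (n + c0)).+1 * (trunc_log 2 t).+1.
Proof.
move=> u_univ KC_le decode_univ KC_pos size_xs indep.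
have [q Eq] := KC_shortest u_univ xs.
pose key i := head false (q i) + ((size (q i)).-1).*2.
pose G := 2 * (n + c0); pose W := (trunc_log 2 t).+1.
have q_gt0 i : 0 < size (q i) by rewrite (Eq i).1.
have size_tail i : size (behead (q i)) = (key i)./2.
  by rewrite /key half_bit_double size_behead.
have head_q i : q i = odd (key i) :: behead (q i).
  by have := q_gt0 i; rewrite /key oddD odd_double addbF oddb; case: (q i).
have key_lt i : key i < G.
  have := KC_le (xs i); rewrite -(Eq i).1 size_xs /key /G.
  by have := q_gt0 i; case: (head false (q i)) => /=; lia.
have t_lt : t < 2 ^ W by apply: trunc_log_ltn.
have [p [Ep size_p]] := decode_univ _ _
  (decode_encode size_tail t_lt head_q size_xs (fun i => (Eq i).2) key_lt (ltn0Sn _)).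
have [pi concat_pi] : exists pi, concat_perm xs pi = flatten [seq xs i | i <- rev (fibers key G)].
  by apply: concat_perm_perm_eq; rewrite perm_rev; apply: perm_fibers.
have KC_concat := (KC_minimal u_univ _).2 _ Ep.
rewrite size_encode // in size_p.
have sum_KC : \sum_(i < t) KC u (xs i) = \sum_(i < t) size (behead (q i)) + t.
  rewrite -[X in _ + X](card_ord t) -sum1_card -big_split /=.
  by apply: eq_bigr => i _; rewrite size_behead -(Eq i).1 addn1 prednK.
move: (indep pi); rewrite concat_pi -(big_morph Posz PoszD erefl) sum_KC; lia.
Qed.

Lemma sq_le_exp2 W : 4 <= W -> W * W <= 2 ^ W.
Proof.
elim: W => [//|W IHW] le_4W.
have [lt_W4|lt_4W|->] := ltngtP W 4; [by have -> : W = 3 by lia| |by []].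
by have := IHW (ltnW lt_4W); rewrite expnS; nia.
Qed.

(* If W > 4B then B W < W^2 / 4 <= 2^W / 4 <= t / 2. *)
Lemma le_of_le_log_linear t a B : 0 < t -> t <= a + B * (trunc_log 2 t).+1 ->
  t <= 2 * a + 4 * B * B.
Proof.
move=> t_gt0; set W := (trunc_log 2 t).+1.
have exp_W : 2 ^ W <= 2 * t by rewrite expnS leq_mul2l /= trunc_logP.
have [le_W4B|lt_4BW] := leqP W (4 * B) => le_t.
  have : B * W <= B * (4 * B) by rewrite leq_mul2l le_W4B orbT.
  lia.
case: B lt_4BW le_t => [|B] lt_4BW le_t; first by lia.
have /sq_le_exp2 : 4 <= W by lia.
nia.
Qed.

Lemma mutually_indep_bound u : universal u -> exists c N, forall n, N <= n ->
  forall a t (xs : 'I_t -> seq bool), (forall i, size (xs i) = n) ->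
  mutually_indep u (Posz a) xs -> t <= 2 * a + c * (n + 1) ^ 2.
Proof.
move=> u_univ.
have [c0 KC_le] := KC_le_size u_univ.
have [cD decode_univ] := u_univ (cdecode u).
have [N KC_pos] := KC_gt0 u_univ.
exists (2 * (cD + 3) + 16 * (c0 + 1) ^ 2), N => n le_Nn a t xs size_xs indep.
have [->|t_gt0] := posnP t; first by [].
have KC_xs i : 0 < KC u (xs i) by apply: KC_pos; rewrite size_xs.
have := mutually_indep_count u_univ KC_le decode_univ KC_xs size_xs indep.
by move/(le_of_le_log_linear t_gt0); nia.
Qed.

Lemma int_of_gt_log (n : nat) (alpha : int) : (2 <= n)%N ->
  (7 * (ln n%:R / ln 2) + 6 < alpha%:~R)%R -> exists a : nat, alpha = a.
Proof.
move=> le_2n lt_alpha.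
have ln_n_gt0 : (0 < ln n%:R)%R.
  have ln1 : (GRing.zero : R) = ln 1 by rewrite ln_1.
  by apply/RltP; rewrite ln1; apply: ln_increasing Rlt_0_1 _; apply/RltP; rewrite ltr1n.
have ln_2_gt0 : (0 < ln 2)%R.
  by apply/RltP/(Rlt_trans _ _ _ _ ln_lt_2)/Rinv_0_lt_compat/Rlt_0_2.
have : ((0 : int)%:~R < alpha%:~R :> R)%R.
  apply: le_lt_trans lt_alpha.
  by rewrite mulr0z addr_ge0 // mulr_ge0 // divr_ge0 // ltW.
by rewrite ltr_int; case: alpha {lt_alpha} => [a|] // _; exists a.
Qed.

Lemma le_poly_exp2 a c m : 0 < m -> 2 * a + c * m <= (c + 2) * m * 2 ^ a.
Proof.
move=> m_gt0; have a_lt := ltn_expl a (ltnSn 1); have := expn_gt0 2 a.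
move: (2 ^ a) a_lt => e a_lt e_gt0; nia.
Qed.

Theorem theorem7 :
  forall u : code, universal u ->
  exists P : {poly R}, exists N : nat, forall n : nat, (N <= n)%N ->
    forall (alpha : int) (t : nat) (xs : 'I_t -> seq bool),
      (7 * (ln (n%:R) / ln 2) + 6 < alpha%:~R)%R ->
      (forall i, size (xs i) = n) ->
      mutually_indep u alpha xs ->
      (t%:R <= P.[n%:R] * (2%:R : R) ^ alpha)%R.
Proof.
move=> u u_univ.
have [c [N bound]] := mutually_indep_bound u_univ.
exists ((c + 2)%:R%:P * ('X + 1) ^+ 2)%R, (maxn N 2).
move=> n /[!geq_max] /andP[le_Nn le_2n] alpha t xs lt_alpha size_xs indep.
have [a alpha_a] := int_of_gt_log le_2n lt_alpha; subst alpha.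
have le_t : (t <= (c + 2) * (n + 1) ^ 2 * 2 ^ a)%N.
  apply: leq_trans (bound n le_Nn a t xs size_xs indep) _.
  by apply: le_poly_exp2; rewrite expn_gt0 addn1.
rewrite -exprnP hornerM hornerC horner_exp hornerD hornerX hornerC.
by move: le_t; rewrite -(ler_nat R) natrM natrM !natrX !natrD.
Qed.
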